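(* For $x,y\in S^1\cap\mathbb{H}^2$, $$2\rho_{\mathbb{H}^2}(x,y)=\rho_{\mathbb{B}^2}(\operatorname{Re}x,\operatorname{Re}y),$$ where $\operatorname{Re}x,\operatorname{Re}y\in(-1,1)$ are the orthogonal projections of $x,y$ onto the real axis, regarded as points of $\mathbb{B}^2$.
   Context: $\mathbb{H}^2$ is the upper half plane, $\mathbb{B}^2$ the unit disk, $S^1$ the unit circle. $\rho_{\mathbb{H}^2}$ is given by $\cosh\rho_{\mathbb{H}^2}(x,y)=1+\frac{|x-y|^2}{2\operatorname{Im}x\operatorname{Im}y}$ and $\rho_{\mathbb{B}^2}$ by $\sinh\frac{\rho_{\mathbb{B}^2}(x,y)}{2}=\frac{|x-y|}{\sqrt{1-|x|^2}\sqrt{1-|y|^2}}$. *)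

From Stdlib Require Import Reals.
From Coquelicot Require Import Coquelicot.
Open Scope R_scope.

Definition acosh (u : R) : R := ln (u + sqrt (u ^ 2 - 1)).

Definition rho_H (x y : C) : R :=
  acosh (1 + (Cmod (x - y)%C) ^ 2 / (2 * Im x * Im y)).

Definition rho_B (x y : C) : R :=
  2 * arcsinh (Cmod (x - y)%C / (sqrt (1 - Cmod x ^ 2) * sqrt (1 - Cmod y ^ 2))).

(* On the unit circle write x = a + i b, y = c + i d with a^2 + b^2 = c^2 + d^2 = 1.
   Then cosh rho_H(x,y) = (1 - a c) / (b d) =: u, while sinh (rho_B(a,c) / 2) =
   |a - c| / (b d) =: s, because sqrt (1 - a^2) = b.  The circle relations give
   (1 - a c)^2 - (b d)^2 = (a - c)^2, i.e. u^2 = s^2 + 1, and for such u, s >= 0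
   acosh u = ln (u + s) = arcsinh s. *)
From Stdlib Require Import Reals Lra Psatz.
From Coquelicot Require Import Coquelicot.
Open Scope R_scope.

Lemma acosh_eq_arcsinh (u s : R) :
  0 <= u -> 0 <= s -> u ^ 2 = s ^ 2 + 1 -> acosh u = arcsinh s.
Proof.
  intros u_ge0 s_ge0 Hus; unfold acosh, arcsinh.
  replace (u ^ 2 - 1) with (s ^ 2) by lra.
  rewrite <- Hus, !sqrt_pow2 by lra.
  now rewrite Rplus_comm.
Qed.

Lemma unit_circle_Re_Im (z : C) : Cmod z = 1 -> Re z ^ 2 + Im z ^ 2 = 1.
Proof. intros Hz; rewrite <- Cmod2_alt, Hz; ring. Qed.

Lemma Cmod_RtoC_sub (a c : R) : Cmod (RtoC a - RtoC c)%C = Rabs (a - c).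
Proof. now rewrite <- RtoC_minus, Cmod_R. Qed.

Lemma sqrt_1_sub_Cmod_Re (z : C) :
  Cmod z = 1 -> 0 < Im z -> sqrt (1 - Cmod (RtoC (Re z)) ^ 2) = Im z.
Proof.
  intros Hz Hpos; rewrite Cmod_R, pow2_abs.
  replace (1 - Re z ^ 2) with (Im z ^ 2) by (apply unit_circle_Re_Im in Hz; lra).
  apply sqrt_pow2; lra.
Qed.

Lemma cosh_rho_H_unit_circle (x y : C) :
  Cmod x = 1 -> 0 < Im x -> Cmod y = 1 -> 0 < Im y ->
  1 + Cmod (x - y)%C ^ 2 / (2 * Im x * Im y) = (1 - Re x * Re y) / (Im x * Im y).
Proof.
  intros Hx bpos Hy dpos.
  apply unit_circle_Re_Im in Hx, Hy.
  rewrite Cmod2_alt.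
  destruct x as [a b], y as [c d]; simpl in *.
  field_simplify_eq; nra.
Qed.

Lemma unit_circle_cosh_sinh (a b c d : R) :
  a ^ 2 + b ^ 2 = 1 -> c ^ 2 + d ^ 2 = 1 -> b * d <> 0 ->
  ((1 - a * c) / (b * d)) ^ 2 = (Rabs (a - c) / (b * d)) ^ 2 + 1.
Proof.
  intros Hab Hcd Hbd; unfold Rdiv.
  rewrite !Rpow_mult_distr, pow2_abs.
  field_simplify_eq; [nra | split; intro; apply Hbd; subst; ring].
Qed.

Theorem mainTheorem5 (x y : C) :
  Cmod x = 1 -> 0 < Im x -> Cmod y = 1 -> 0 < Im y ->
  2 * rho_H x y = rho_B (RtoC (Re x)) (RtoC (Re y)).
Proof.
  intros Hx bpos Hy dpos.
  unfold rho_H, rho_B.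
  rewrite cosh_rho_H_unit_circle, Cmod_RtoC_sub, !sqrt_1_sub_Cmod_Re by assumption.
  assert (Ex := unit_circle_Re_Im x Hx); assert (Ey := unit_circle_Re_Im y Hy).
  f_equal; apply acosh_eq_arcsinh.
  - apply Rdiv_le_0_compat; nra.
  - apply Rdiv_le_0_compat; [apply Rabs_pos | nra].
  - apply unit_circle_cosh_sinh; auto; nra.
Qed.
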